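(* Let $e\ge4$, let $I\subseteq\mathbb Z$ be a union of $c$ congruence classes modulo $e$ with $2\le c\le e-2$, put $\bar c=e-c$, and let $\lambda$ be an $I$-separated partition. Then: (1) $\lambda$ is $(e,\bar c)$-regular if and only if $\lambda_{\bar I}$ is $\bar c$-restricted; (2) if $\lambda_I$ is $c$-regular, then $\lambda$ is $(e,y)$-regular for every $y\in(\bar c,\bar c+1)\cap\mathbb Q$; (3) if $y\in[\bar c+1,e-1]\cap\mathbb Q$, then $\lambda$ is $(e,y)$-regular if and only if $\lambda_I$ is $(c,y-\bar c)$-regular; (4) $\lambda$ is $e$-restricted if and only if $\lambda_I$ is $c$-restricted.
   Context: $\bar I=\mathbb Z\setminus I$. Fix a large integer $n$ divisible by $e$. The $n$-bead abacus display of $\lambda$ (with $e$ runners) is the set of positions $\{\lambda_r+r-1: 1\le r\le n\}\subseteq\mathbb Z_{\ge0}$ (occupied positions); a set of $N$ occupied positions $b_1>\dots>b_N$ determines the partition with parts $b_r+r-N$. Discarding all positions not in $I$ and relabelling the remaining positions $0,1,2,\dots$ in increasing order gives an abacus display (on $c$ runners) of a partition $\lambda_I$; discarding the positions in $I$ similarly gives $\lambda_{\bar I}$. $\lambda$ is $I$-separated if, in its display, the first empty position lying in $I$ comes after the last occupied position lying in $\bar I$. A partition is $k$-regular if no $k$ equal positive parts, $k$-restricted if $\lambda_r-\lambda_{r+1}<k$ for all $r$. For integers $1\le y'<e'$, a partition is $(e',y')$-regular if it has no hook of length $e't$ and arm length $y't-1$ for any $t\ge1$ (hook at $(r,c)$: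 length $\lambda_r-c+\lambda'_c-r+1$, arm length $\lambda_r-c$); for rational $y$ with denominator $z$, $(e,y)$-regular means $(ez,yz)$-regular, and $(c,y')$-regular for rational $y'$ with denominator $z'$ means $(cz',y'z')$-regular. *)

From mathcomp Require Import all_boot all_order all_algebra.
Set Implicit Arguments. Unset Strict Implicit. Unset Printing Implicit Defensive.

(* Partitions: finite weakly decreasing sequences of positive naturals.
   lambda_{r+1} = nth 0 l r  (0-based index r). *)
Definition is_partition (l : seq nat) : bool :=
  sorted (fun x y => y <= x) l && all (fun x => 0 < x) l.

(* I = union of the congruence classes mod e whose residues lie in S. *)
Definition inI (e : nat) (S : {set 'I_e}) (p : nat) : bool :=
  [exists s in S, (s : nat) == p %% e].

(* n-bead abacus display: positions lambda_r - r + n, 1 <= r <= n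
   (0-based: nth 0 l r + (n - r.+1)). *)
Definition abacus (n : nat) (l : seq nat) : seq nat :=
  [seq nth 0 l r + (n - r.+1) | r <- iota 0 n].

Definition occupied (n : nat) (l : seq nat) (p : nat) : bool := p \in abacus n l.

Definition relabel (P : pred nat) (p : nat) : nat := count P (iota 0 p).

(* the partition determined by a set of occupied positions b_1 > ... > b_N:
   parts b_r + r - N (zero parts dropped) *)
Definition partition_of_beads (bs : seq nat) : seq nat :=
  let b := sort (fun x y => y <= x) bs in
  let N := size b in
  [seq x <- [seq nth 0 b r + r.+1 - N | r <- iota 0 N] | 0 < x].

Definition sub_partition (P : pred nat) (n : nat) (l : seq nat) : seq nat :=
  partition_of_beads [seq relabel P p | p <- abacus n l & P p].

Definition lamI e (S : {set 'I_e}) n l := sub_partition (inI S) n l.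
Definition lamIbar e (S : {set 'I_e}) n l :=
  sub_partition (fun p => ~~ inI S p) n l.

Definition I_separated e (S : {set 'I_e}) n l : Prop :=
  forall p q, inI S p -> ~~ occupied n l p -> ~~ inI S q -> occupied n l q -> q < p.

Definition k_regular (k : nat) (l : seq nat) : Prop :=
  forall x, 0 < x -> count (pred1 x) l < k.

Definition k_restricted (k : nat) (l : seq nat) : Prop :=
  forall r, nth 0 l r - nth 0 l r.+1 < k.

Definition conj_part (l : seq nat) (c : nat) : nat := count (fun x => c <= x) l.

(* hook at (r+1, c) (row r 0-based), 1 <= c <= lambda_{r+1} *)
Definition hook_len (l : seq nat) (r c : nat) : nat :=
  nth 0 l r - c + (conj_part l c - r).
Definition arm_len (l : seq nat) (r c : nat) : nat := nth 0 l r - c.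

Definition ey_regular_nat (e' y' : nat) (l : seq nat) : Prop :=
  forall r c t, 0 < t -> r < size l -> 0 < c <= nth 0 l r ->
    ~ (hook_len l r c = e' * t /\ arm_len l r c = y' * t - 1).

(* (e,y)-regular for rational y with denominator z: (ez, yz)-regular *)
Definition ey_regular (e : nat) (y : rat) (l : seq nat) : Prop :=
  ey_regular_nat (e * `|denq y|%N) `|numq y|%N l.

From mathcomp Require Import all_boot all_order all_algebra.
From mathcomp Require Import zify ring.
Set Implicit Arguments. Unset Strict Implicit. Unset Printing Implicit Defensive.

(* Everything is translated to bead sets.  In a bead set, hooks are the pairs
   gap < bead (length: their distance; arm: the gaps strictly between them),
   consecutive parts differing by [k] are runs of [k] gaps below a bead, and
   [k] equal nonzero parts are runs of [k] beads above a gap (section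
   BeadHooks).  Relabelling the positions of a set [P] of runners carries
   these pairs and runs to the display of the sub-partition on [P] (section
   Relabel).  Hence all four claims compare hooks and runs of the single
   display of [l], on all runners and on the runners in or off [I]
   ([hook_free], [gap_run], [bead_run]).  Separation settles these
   comparisons (section Separated): a stretch of the display from a gap to a
   bead consists, on [I], only of beads if the bead is off [I], and, off [I],
   only of gaps if the bead is on [I]; every window of [e] consecutive
   positions contains exactly [c] positions of [I].  Finally a rational
   slope [y = Y / z] in lowest terms is converted into the pair [(e z, Y)]. *)

(* [below P x] is the number of positions [p < x] satisfying [P]; note that
   [relabel P p] is, by definition, [below P p]. *)
Definition below (P : pred nat) (x : nat) : nat := count P (iota 0 x).

Section Below.
Variable P : pred nat.

Lemma belowS x : below P x.+1 = below P x + P x.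
Proof. by rewrite /below -addn1 iotaD count_cat /= addn0. Qed.

Lemma below_window u v : u <= v ->
  below P v = below P u + count P (iota u (v - u)).
Proof. by move=> uv; rewrite /below -count_cat -iotaD subnKC. Qed.

Lemma below_sub u v : u <= v -> below P v - below P u = count P (iota u (v - u)).
Proof. by move=> uv; rewrite (below_window uv) addKn. Qed.

Lemma below_shift a k : below P (a + k) = below P a + count P (iota a k).
Proof. by rewrite (below_window (leq_addr k a)) addKn. Qed.

Lemma below_mono u v : u <= v -> below P u <= below P v.
Proof. by move=> uv; rewrite (below_window uv) leq_addr. Qed.

Lemma below_le x : below P x <= x.
Proof. by rewrite /below -[X in _ <= X](size_iota 0 x) count_size. Qed.

Lemma below_compl x : below P x + below (predC P) x = x.
Proof. by rewrite /below count_predC size_iota. Qed.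

Lemma below_ivt x k : k < below P x -> exists y, [/\ y < x, P y & below P y = k].
Proof.
elim: x => [|x IH] //; rewrite belowS => hk.
case: (ltnP k (below P x)) => [/IH [y [yx Py <-]]|kx].
  by exists y; split => //; apply: ltnW.
by exists x; split => //; case: (P x) hk => /=; lia.
Qed.

Lemma below_lt p q : P p -> p < q -> below P p < below P q.
Proof. by move=> Pp pq; have := below_mono pq; rewrite belowS Pp; lia. Qed.

Lemma below_leW p q : P q -> below P p <= below P q -> p <= q.
Proof. by move=> Pq h; case: (leqP p q) => // /(below_lt Pq); lia. Qed.

Lemma below_ltW p q : below P p < below P q -> p < q.
Proof. by move=> h; case: (leqP q p) => // /below_mono; lia. Qed.

Lemma below_inj p q : P p -> P q -> below P p = below P q -> p = q.
Proof.
move=> Pp Pq h; case: (ltngtP p q) => // [/(below_lt Pp)|/(below_lt Pq)]; lia.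
Qed.
End Below.

Section Windows.
Variables (P Q : pred nat) (u k : nat).
Local Notation w := (iota u k).

Lemma count_and_le s : count (fun p => P p && Q p) s <= count P s.
Proof. by elim: s => //= y s; case: (P y); case: (Q y) => /=; lia. Qed.

Lemma count_and_split s :
  count P s = count (fun p => P p && Q p) s + count (fun p => P p && ~~ Q p) s.
Proof. by elim: s => //= y s ->; case: (P y); case: (Q y) => /=; lia. Qed.

Lemma window_and (H : forall y, u <= y < u + k -> P y -> Q y) :
  count (fun p => P p && Q p) w = count P w.
Proof.
apply: eq_in_count => y; rewrite mem_iota => hy.
by case Py: (P y) => //=; apply: H.
Qed.

Lemma window_andE : count (fun p => P p && Q p) w = count P w ->
  forall y, u <= y < u + k -> P y -> Q y.
Proof.
move=> h y hy Py.
suff /allP/(_ y) : all (fun p => P p ==> Q p) w by rewrite mem_iota hy Py; apply.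
elim: w h => //= z s IH; have := count_and_le s.
by case: (P z); case: (Q z) => /= h1 h2; rewrite ?IH //; lia.
Qed.

Lemma window_full : count Q w = k -> forall y, u <= y < u + k -> Q y.
Proof.
move=> h y hy; have /allP : all Q w by rewrite all_count size_iota h.
by apply; rewrite mem_iota.
Qed.

Lemma window_fullI : (forall y, u <= y < u + k -> Q y) -> count Q w = k.
Proof.
move=> h; apply/eqP; rewrite -[X in _ == X](size_iota u k) -all_count.
by apply/allP => y; rewrite mem_iota; apply: h.
Qed.

Lemma window_none : (forall y, u <= y < u + k -> ~~ Q y) -> count Q w = 0.
Proof.
move=> h; apply/eqP; rewrite -leqn0 leqNgt -has_count; apply/hasPn => y.
by rewrite mem_iota; apply: h.
Qed.

Lemma window_mem y : u <= y < u + k -> Q y -> 0 < count Q w.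
Proof. by move=> hy Qy; rewrite -has_count; apply/hasP; exists y; rewrite ?mem_iota. Qed.
End Windows.

Lemma window_pigeonhole (Q : pred nat) e m T a : m * T < count Q (iota a (e * T)) ->
  exists2 j, j < T & m < count Q (iota (a + e * j) e).
Proof.
elim: T => [|T IH]; first by rewrite !muln0.
rewrite [e * _]mulnS [e + _]addnC iotaD count_cat => h.
case: (ltnP m (count Q (iota (a + e * T) e))) => hT; first by exists T.
have /IH [j jT hj] : m * T < count Q (iota a (e * T)) by lia.
by exists j => //; apply: ltnW.
Qed.

Lemma mul_slope_le m z Y t : (m + 1) * z <= Y -> m * (z * t) + z * t <= Y * t.
Proof. by move=> h; have := leq_mul h (leqnn t); rewrite mulnDl mul1n mulnDl -mulnA. Qed.

Lemma mul_slope_lt m z Y t : 0 < t -> m * z < Y -> m * (z * t) < Y * t.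
Proof. by move=> t0; rewrite mulnA ltn_pmul2r. Qed.

Lemma mul_slope_gt m z Y t : 0 < t -> Y < (m + 1) * z -> Y * t < m * (z * t) + z * t.
Proof. by move=> t0; rewrite -(ltn_pmul2r t0) mulnDl mul1n mulnDl -mulnA. Qed.

Local Notation geqn := (fun x y : nat => y <= x).

Lemma geqn_trans : transitive geqn. Proof. exact: rev_trans leq_trans. Qed.

Lemma nth_sorted_geqn (l : seq nat) i j : sorted geqn l -> i <= j ->
  nth 0 l j <= nth 0 l i.
Proof.
elim: l i j => [|x l IH] i j so ij; first by rewrite !nth_nil.
case: i ij => [|i] ij; case: j ij => [|j] ij //=; last exact: (IH i j (path_sorted so) ij).
case: (ltnP j (size l)) => hj; last by rewrite nth_default.
by have /allP := order_path_min geqn_trans so; apply; apply: mem_nth.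
Qed.

Lemma count_below_nth (b : seq nat) r : sorted geqn b -> uniq b -> r < size b ->
  count (fun y => y < nth 0 b r) b = size b - r.+1.
Proof.
elim: b r => //= x b IH r so /andP[xb ub] hr.
have bx : all (fun y => y < x) b.
  apply/allP => y yb; have /allP/(_ y yb) := order_path_min geqn_trans so.
  by rewrite leq_eqVlt => /orP[/eqP xy|//]; move: xb; rewrite -xy yb.
case: r hr => [|r] hr /=.
  by rewrite ltnn subn1; apply/eqP; rewrite -all_count.
have xr : nth 0 b r < x by apply: (allP bx); apply: mem_nth.
by rewrite ltnNge (ltnW xr) IH ?(path_sorted so).
Qed.

Lemma nth_filter_pos (s : seq nat) r : sorted geqn s ->
  nth 0 [seq x <- s | 0 < x] r = nth 0 s r.
Proof.
elim: s r => //= -[|x] s IH r so; last by case: r => //= r; rewrite IH ?(path_sorted so).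
have s0 : all (pred1 0) s.
  by apply/allP => y ys; have /allP/(_ y ys) := order_path_min geqn_trans so; rewrite leqn0.
rewrite (eq_in_filter (a2 := pred0)) ?filter_pred0 ?nth_nil; last first.
  by move=> y /(allP s0) /eqP ->.
case: r => // r; case: (ltnP r (size s)) => hr; last by rewrite nth_default.
by apply/esym/eqP; apply: (allP s0); apply: mem_nth.
Qed.

Definition beads (cs : seq nat) : nat -> nat := below (fun p => p \in cs).
Definition gaps (cs : seq nat) : nat -> nat := below (fun p => p \notin cs).

Lemma beadsS cs x : beads cs x.+1 = beads cs x + (x \in cs). Proof. exact: belowS. Qed.
Lemma gapsS cs x : gaps cs x.+1 = gaps cs x + (x \notin cs). Proof. exact: belowS. Qed.
Lemma beads_mono cs u v : u <= v -> beads cs u <= beads cs v. Proof. exact: below_mono. Qed.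
Lemma gaps_mono cs u v : u <= v -> gaps cs u <= gaps cs v. Proof. exact: below_mono. Qed.
Lemma gaps_sub_gt0 cs a x : a \notin cs -> a < x -> 0 < gaps cs x - gaps cs a.
Proof. by move=> an ax; have := gaps_mono cs ax; rewrite gapsS an; lia. Qed.

(* The partition [mu] of a bead set [cs], read along its beads [b] in
   decreasing order: its parts are the numbers of gaps below the beads. *)
Section BeadPartition.
Variable cs : seq nat.
Hypothesis ucs : uniq cs.
Local Notation b := (sort geqn cs).
Local Notation N := (size cs).
Local Notation mu := (partition_of_beads cs).

Lemma perm_sort_beads : perm_eq b cs. Proof. by rewrite perm_sort. Qed.

Lemma beads_gaps x : beads cs x + gaps cs x = x. Proof. exact: below_compl. Qed.

Lemma beads_count x : beads cs x = count (fun y => y < x) cs.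
Proof.
elim: x => [|x IH]; first by rewrite /beads /below /= count_pred0.
rewrite /beads belowS -/(beads cs x) IH -(count_uniq_mem x ucs) -count_predUI.
rewrite [X in _ + X](eq_count (a2 := pred0)) ?count_pred0 ?addn0; last first.
  by move=> y /=; case: (ltngtP y x).
by apply: eq_count => y /=; rewrite ltnS; case: (ltngtP y x).
Qed.

Lemma beads_le_size x : beads cs x <= N.
Proof. by rewrite beads_count count_size. Qed.

Lemma nth_sorted_mem r : r < N -> nth 0 b r \in cs.
Proof. by move=> hr; rewrite -(mem_sort geqn) mem_nth // size_sort. Qed.

Lemma beads_nth r : r < N -> beads cs (nth 0 b r) = N - r.+1.
Proof.
move=> hr; rewrite beads_count -(permP perm_sort_beads) -(size_sort geqn).
by apply: count_below_nth; rewrite ?sort_sorted ?sort_uniq ?size_sort //;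
  move=> x y; apply: leq_total.
Qed.

Lemma partition_of_beadsE : mu = [seq x <- map (gaps cs) b | 0 < x].
Proof.
rewrite /partition_of_beads size_sort; congr filter.
rewrite -[in RHS](mkseq_nth 0 b) /mkseq -map_comp size_sort.
apply/eq_in_map => r; rewrite mem_iota /= => hr.
have := beads_nth hr; have := beads_gaps (nth 0 b r).
have := below_le (fun p => p \in cs) (nth 0 b r); rewrite -/(beads cs _); lia.
Qed.

Lemma nth_parts r : nth 0 mu r = if r < N then gaps cs (nth 0 b r) else 0.
Proof.
rewrite partition_of_beadsE nth_filter_pos; last first.
  rewrite sorted_map; apply: sub_sorted (sort_sorted (fun x y => leq_total y x) cs).
  by move=> x y; apply: below_mono.
case: ifP => hr; first by rewrite (nth_map 0) // size_sort.
by rewrite nth_default // size_map size_sort leqNgt hr.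
Qed.

Lemma size_parts : size mu <= N.
Proof.
by rewrite partition_of_beadsE size_filter -(size_sort geqn) -(size_map (gaps cs)) count_size.
Qed.

Lemma conj_parts k : 0 < k -> conj_part mu k = count (fun y => k <= gaps cs y) cs.
Proof.
move=> k0; rewrite /conj_part partition_of_beadsE count_filter count_map.
rewrite -(permP perm_sort_beads); apply: eq_count => y /=.
by case: (leqP k (gaps cs y)) => //= h; apply: leq_trans k0 h.
Qed.

Lemma count_parts x : 0 < x -> count (pred1 x) mu = count (fun y => gaps cs y == x) cs.
Proof.
move=> x0; rewrite partition_of_beadsE count_filter count_map.
by rewrite -(permP perm_sort_beads); apply: eq_count => y /=; case: eqP => // ->.
Qed.
End BeadPartition.

Lemma below_predT x : below predT x = x.
Proof. by rewrite /below count_predT size_iota. Qed.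

Definition pgaps (P : pred nat) (bs : seq nat) : nat -> nat :=
  below (fun p => P p && (p \notin bs)).
Definition pbeads (P : pred nat) (bs : seq nat) : nat -> nat :=
  below (fun p => P p && (p \in bs)).

(* no pair gap [a] < bead [x] on [P] spans [E t] positions of [P] with
   [Y t - 1] gaps of [P] strictly between them: these pairs are the hooks of
   length [E t] and arm length [Y t - 1] *)
Definition hook_free (P : pred nat) (bs : seq nat) (E Y : nat) : Prop :=
  forall a x t, 0 < t -> P a -> P x -> a \notin bs -> x \in bs -> a < x ->
    ~ (below P x - below P a = E * t /\ pgaps P bs x - pgaps P bs a - 1 = Y * t - 1).

(* the positions of [P] in [[a, a')] are at least [k] gaps, and some bead of
   [P] lies above them: such runs are the differences [>= k] of parts *)
Definition gap_run (P : pred nat) (bs : seq nat) (k : nat) : Prop :=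
  exists a a' x, [/\ a <= a', P x && (x \in bs), below P a' <= below P x,
    pgaps P bs a' - pgaps P bs a = below P a' - below P a
    & k <= below P a' - below P a].

(* the positions of [P] in [[a, a')] are at least [k] beads, and some gap of
   [P] lies below them: such runs are the [k] equal nonzero parts *)
Definition bead_run (P : pred nat) (bs : seq nat) (k : nat) : Prop :=
  exists a a', [/\ a <= a', pbeads P bs a' - pbeads P bs a = below P a' - below P a,
    k <= below P a' - below P a & 0 < pgaps P bs a].

Lemma hook_free_predT cs E Y : hook_free predT cs E Y <->
  (forall y z t, 0 < t -> y \notin cs -> z \in cs -> y < z ->
     ~ (z - y = E * t /\ gaps cs z - gaps cs y - 1 = Y * t - 1)).
Proof.
split=> H y z t t0.
  by move=> yn zn yz; have := H y z t t0 isT isT yn zn yz; rewrite !below_predT.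
by move=> _ _ yn zn yz; rewrite !below_predT; apply: H.
Qed.

Lemma gap_run_predT cs k : gap_run predT cs k <->
  exists y y' z, [/\ y <= y', y' <= z, z \in cs, gaps cs y' - gaps cs y = y' - y & k <= y' - y].
Proof.
split=> -[y [y' [z [h1 h2 h3 h4 h5]]]]; exists y, y', z.
  by move: h3 h4 h5; rewrite !below_predT.
by rewrite !below_predT.
Qed.

Lemma bead_run_predT cs k : bead_run predT cs k <->
  exists y y', [/\ y <= y', beads cs y' - beads cs y = y' - y, k <= y' - y & 0 < gaps cs y].
Proof.
by split=> -[y [y' [h1 h2 h3 h4]]]; exists y, y'; move: h2 h3; rewrite !below_predT.
Qed.

Section BeadHooks.
Variable cs : seq nat.
Hypothesis ucs : uniq cs.
Local Notation b := (sort geqn cs).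
Local Notation N := (size cs).
Local Notation mu := (partition_of_beads cs).

Lemma count_beads_above y : count (fun w => y < w) cs = N - beads cs y.+1.
Proof.
rewrite beads_count //; have := count_predC (fun w => y < w) cs.
rewrite (@eq_count _ (predC _) (fun w => w < y.+1)); first lia.
by move=> w /=; rewrite ltnS -leqNgt.
Qed.

Lemma hook_gap_bead r y : r < N -> y < nth 0 b r -> y \notin cs ->
  hook_len mu r (gaps cs y).+1 = nth 0 b r - y /\
  arm_len mu r (gaps cs y).+1 = gaps cs (nth 0 b r) - gaps cs y - 1.
Proof.
move=> hr; set z := nth 0 b r => yz yn.
rewrite /hook_len /arm_len nth_parts // hr conj_parts //.
rewrite (eq_count (a2 := fun w => y < w)); last first.
  move=> w /=; case: (ltnP y w) => h; have := gaps_mono cs h;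
    rewrite ?gapsS ?yn /=; lia.
have zin : z \in cs by apply: nth_sorted_mem.
have := beads_nth ucs hr; have := beadsS cs z; have := gapsS cs z.
have := beadsS cs y; have := gapsS cs y.
have := beads_gaps cs y.+1; have := beads_gaps cs z.+1.
have := gaps_mono cs yz; have : beads cs y.+1 <= beads cs z.+1 by apply: beads_mono; exact: ltnW.
rewrite -/z count_beads_above zin yn /=; split; lia.
Qed.

(* Every hook arises in this way from a gap below the bead of its row. *)
Lemma ey_regular_beads E Y : ey_regular_nat E Y mu <-> hook_free predT cs E Y.
Proof.
rewrite hook_free_predT; split=> [H y z t t0 yn zin yz [hl ha] | H r k t t0 hr /andP[k0 hk] [hl ha]].
- have hr : index z b < N by rewrite -(size_sort geqn) index_mem mem_sort.
  have hz : nth 0 b (index z b) = z by rewrite nth_index // mem_sort.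
  have := hook_gap_bead hr; rewrite hz => /(_ y yz yn) [hl' ha'].
  have gyz : (gaps cs y).+1 <= gaps cs z by have := gaps_mono cs yz; rewrite gapsS yn; lia.
  apply: (H (index z b) (gaps cs y).+1 t t0).
  + rewrite ltnNge; apply/negP => hs.
    by have := nth_parts ucs (index z b); rewrite nth_default // hr hz; lia.
  + by rewrite nth_parts // hr hz gyz.
  + by rewrite hl' ?ha'.
- have hrN := leq_trans hr (size_parts ucs).
  move: hk; rewrite nth_parts // hrN => hk.
  have [y [yz yn hy]] : exists y, [/\ y < nth 0 b r, y \notin cs & gaps cs y = k.-1].
    by apply: below_ivt; rewrite -/(gaps cs _); lia.
  have [hl' ha'] := hook_gap_bead hrN yz yn.
  apply: (H y (nth 0 b r) t t0 yn (nth_sorted_mem hrN) yz).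
  by rewrite -hl' -ha' hy prednK.
Qed.

(* A run of at least [k] gaps below a bead separates two consecutive parts by
   at least [k]: they are the parts of the first bead above the run (row [r])
   and of the next bead below it. *)
Lemma gap_run_parts k : gap_run predT cs k -> exists r, k <= nth 0 mu r - nth 0 mu r.+1.
Proof.
case/gap_run_predT => y [y' [z [yy' y'z zin hrun hk]]].
have eB : beads cs y' = beads cs y.
  have := beads_gaps cs y; have := beads_gaps cs y'; have := gaps_mono cs yy'.
  by have := beads_mono cs yy'; lia.
have bz : beads cs y' < N.
  have := beads_mono cs y'z; have := beadsS cs z; have := beads_le_size ucs z.+1.
  by rewrite zin /=; lia.
have [r rE] : exists r, r = N - (beads cs y').+1 by eexists.
have hr : r < N by lia.
have br := beads_nth ucs hr.
have y'r : y' <= nth 0 b r.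
  by case: (leqP y' (nth 0 b r)) => // /(beads_mono cs); rewrite beadsS nth_sorted_mem //=; lia.
have r1y : nth 0 mu r.+1 <= gaps cs y.
  rewrite nth_parts //; case: ifP => // hr1; have := beads_nth ucs hr1.
  case: (ltnP (nth 0 b r.+1) y) => [/ltnW/(gaps_mono cs) //|/(beads_mono cs)]; lia.
exists r; rewrite (nth_parts ucs r) hr.
by have := gaps_mono cs y'r; have := beads_gaps cs y; have := beads_gaps cs y'; lia.
Qed.

(* Conversely, the gaps between the beads of rows [r.+1] and [r] form a run
   whose length is the difference of the two parts. *)
Lemma parts_gap_run r k : 0 < k -> k <= nth 0 mu r - nth 0 mu r.+1 -> gap_run predT cs k.
Proof.
move=> k0 hk; apply/gap_run_predT.
have hr : r < N by case: (ltnP r N) => // hN; move: hk; rewrite nth_parts // ltnNge hN /=; lia.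
have [y [hBy hGy]] : exists y, beads cs y = N - r.+1 /\ gaps cs y = nth 0 mu r.+1.
  case: (ltnP r.+1 N) => hr1; last first.
    by exists 0; rewrite nth_parts // ltnNge hr1 /= /beads /gaps /below /=; lia.
  exists (nth 0 b r.+1).+1; have := beads_nth ucs hr1.
  by rewrite beadsS gapsS nth_sorted_mem // nth_parts // hr1 /=; lia.
move: hk; rewrite (nth_parts ucs r) hr -hGy => hk.
have := beads_nth ucs hr; have := beads_gaps cs y; have := beads_gaps cs (nth 0 b r).
have yr : y <= nth 0 b r.
  by case: (leqP y (nth 0 b r)) => // /ltnW/(gaps_mono cs); lia.
by exists y, (nth 0 b r), (nth 0 b r); split; rewrite ?nth_sorted_mem //; lia.
Qed.

Lemma restricted_beads k : 0 < k -> k_restricted k mu <-> ~ gap_run predT cs k.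
Proof.
move=> k0; split=> [Hres /gap_run_parts [r] | Hno r]; first by have := Hres r; lia.
by case: (ltnP (nth 0 mu r - nth 0 mu r.+1) k) => // /(parts_gap_run k0).
Qed.

(* A run of at least [k] beads above a gap consists of beads with equal
   nonzero numbers of gaps below them, i.e. of [k] equal nonzero parts. *)
Lemma bead_run_parts k : bead_run predT cs k -> exists2 x, 0 < x & k <= count (pred1 x) mu.
Proof.
case/bead_run_predT => y [y' [yy' hrun hk gy]]; exists (gaps cs y) => //.
rewrite count_parts //; apply: leq_trans hk _.
have run_in : all (fun w => w \in cs) (iota y (y' - y)).
  by rewrite all_count size_iota -(below_sub _ yy'); apply/eqP.
have sub : {subset iota y (y' - y) <= [seq w <- cs | gaps cs w == gaps cs y]}.
  move=> w wi; rewrite mem_filter (allP run_in w wi) andbT.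
  move: wi; rewrite mem_iota => /andP[yw wy'].
  have := gaps_mono cs yw; have := gaps_mono cs (ltnW wy'); rewrite subnKC //.
  have := beads_gaps cs y; have := beads_gaps cs y'; lia.
by have := uniq_leq_size (iota_uniq y (y' - y)) sub; rewrite size_iota size_filter.
Qed.

(* Conversely, the beads with [x] gaps below them lie between the last gap
   with [x - 1] gaps below it and the first gap with [x] gaps below it. *)
Lemma parts_bead_run k x : 0 < k -> 0 < x -> k <= count (pred1 x) mu -> bead_run predT cs k.
Proof.
move=> k0 x0; rewrite count_parts // => hk; apply/bead_run_predT.
have /hasP [w win /eqP wx] : has (fun y => gaps cs y == x) cs by rewrite has_count; lia.
have [g [gw gn gx]] : exists y, [/\ y < w, y \notin cs & gaps cs y = x.-1].
  by apply: below_ivt; rewrite -/(gaps cs w); lia.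
have [m [_ mn mx]] : exists y, [/\ y < (x + N).+1, y \notin cs & gaps cs y = x].
  apply: below_ivt; rewrite -/(gaps cs _).
  have := beads_gaps cs (x + N).+1; have := beads_le_size ucs (x + N).+1; lia.
have sub : {subset [seq v <- cs | gaps cs v == x] <= iota g.+1 (m - g.+1)}.
  move=> v; rewrite mem_filter mem_iota => /andP[/eqP vx vin].
  have gv : g < v by case: (ltnP g v) => // /(gaps_mono cs); lia.
  have vm : v < m.
    case: (ltngtP v m) => // [/(gaps_mono cs)|vm]; last by rewrite -vm vin in mn.
    by rewrite gapsS mn; lia.
  lia.
have := uniq_leq_size (filter_uniq _ ucs) sub; rewrite size_iota size_filter => hsz.
have := gapsS cs g; have := beads_gaps cs g.+1; have := beads_gaps cs m.
have hkm : k <= m - g.+1 := leq_trans hk hsz.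
rewrite gn /= => ? ? ?; exists g.+1, m; split; lia.
Qed.

Lemma regular_beads k : 0 < k -> k_regular k mu <-> ~ bead_run predT cs k.
Proof.
move=> k0; split=> [Hreg /bead_run_parts [x x0] | Hno x x0]; first by have := Hreg x x0; lia.
by case: (ltnP (count (pred1 x) mu) k) => // /(parts_bead_run k0 x0).
Qed.
End BeadHooks.

Section Relabel.
Variable P : pred nat.
Hypothesis P_infinite : forall k, exists x, k < below P x.
Variable bs : seq nat.
Hypothesis ubs : uniq bs.
Local Notation cs := [seq relabel P p | p <- bs & P p].

Lemma below_onto y : exists p, P p /\ below P p = y.
Proof. by have [x /below_ivt [p [_ Pp <-]]] := P_infinite y; exists p. Qed.

Lemma uniq_relabel : uniq cs.
Proof.
rewrite map_inj_in_uniq ?filter_uniq // => p q; rewrite !mem_filter.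
by move=> /andP[Pp _] /andP[Pq _]; apply: below_inj.
Qed.

Lemma mem_relabel p : P p -> (below P p \in cs) = (p \in bs).
Proof.
move=> Pp; apply/mapP/idP => [[q]|pb]; last by exists p; rewrite ?mem_filter ?Pp.
by rewrite mem_filter => /andP[Pq qb] /(below_inj Pp Pq) ->.
Qed.

Lemma relabelP y : y \in cs -> exists p, [/\ P p, p \in bs & y = below P p].
Proof. by case/mapP => p; rewrite mem_filter => /andP[Pp pb] ->; exists p. Qed.

Lemma gaps_relabel x : gaps cs (below P x) = pgaps P bs x.
Proof.
elim: x => [|x IH] //; rewrite /pgaps !belowS -/(pgaps P bs x).
by case Px: (P x); rewrite /= ?addn0 -?IH // addn1 gapsS mem_relabel.
Qed.

Lemma beads_relabel x : beads cs (below P x) = pbeads P bs x.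
Proof.
elim: x => [|x IH] //; rewrite /pbeads !belowS -/(pbeads P bs x).
by case Px: (P x); rewrite /= ?addn0 -?IH // addn1 beadsS mem_relabel.
Qed.

Lemma hook_free_relabel E Y : hook_free predT cs E Y <-> hook_free P bs E Y.
Proof.
rewrite hook_free_predT; split=> H.
- move=> a x t t0 Pa Px an xb ax; rewrite -!gaps_relabel.
  by apply: H; rewrite ?mem_relabel //; apply: below_lt.
- move=> y z t t0 yn /relabelP [x [Px xb ->]] yz.
  have [a [Pa ay]] := below_onto y; subst y.
  rewrite !gaps_relabel; apply: H => //; first by rewrite -(mem_relabel Pa).
  exact: below_ltW yz.
Qed.

Lemma gap_run_relabel k : gap_run predT cs k <-> gap_run P bs k.
Proof.
rewrite gap_run_predT; split.
- move=> [y [y' [z [yy' y'z /relabelP [x [Px xb zx]] hrun hk]]]].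
  have [a [Pa ay]] := below_onto y; have [a' [Pa' ay']] := below_onto y'; subst y y' z.
  exists a, a', x; split; rewrite ?Px ?xb -?gaps_relabel //.
  exact: below_leW yy'.
- move=> [a [a' [x [aa' /andP[Px xb] a'x hrun hk]]]].
  exists (below P a), (below P a'), (below P x).
  by rewrite !gaps_relabel mem_relabel // (below_mono P aa').
Qed.

Lemma bead_run_relabel k : bead_run predT cs k <-> bead_run P bs k.
Proof.
rewrite bead_run_predT; split.
- move=> [y [y' [yy' hrun hk gy]]].
  have [a [Pa ay]] := below_onto y; have [a' [Pa' ay']] := below_onto y'; subst y y'.
  exists a, a'; split; rewrite -?beads_relabel -?gaps_relabel //.
  exact: below_leW yy'.
- move=> [a [a' [aa' hrun hk ga]]]; exists (below P a), (below P a').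
  by rewrite !beads_relabel gaps_relabel (below_mono P aa').
Qed.
End Relabel.

Section Abacus.
Variables (n : nat) (l : seq nat).
Hypotheses (pl : is_partition l) (sl : size l <= n).

Lemma sorted_partition : sorted geqn l. Proof. by case/andP: pl. Qed.

Lemma nth_abacus r : r < n -> nth 0 (abacus n l) r = nth 0 l r + (n - r.+1).
Proof. by move=> hr; rewrite /abacus (nth_map 0) ?size_iota // nth_iota. Qed.

Lemma sorted_abacus : sorted geqn (abacus n l).
Proof.
rewrite /abacus sorted_map; apply: sub_sorted (iota_ltn_sorted 0 n) => i j /= ij.
by have := nth_sorted_geqn sorted_partition (ltnW ij); lia.
Qed.

Lemma uniq_abacus : uniq (abacus n l).
Proof.
rewrite /abacus map_inj_in_uniq ?iota_uniq // => i j; rewrite !mem_iota /=.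
wlog ij : i j / i <= j => [H hi hj eq_ij|hi hj].
  by case: (leqP i j) => [|/ltnW] ?; [|apply/esym]; apply: H.
by have := nth_sorted_geqn sorted_partition ij; lia.
Qed.

Lemma partition_of_abacus : partition_of_beads (abacus n l) = l.
Proof.
rewrite /partition_of_beads sorted_sort ?sorted_abacus //; last exact: geqn_trans.
rewrite size_map size_iota.
have -> : [seq nth 0 (abacus n l) r + r.+1 - n | r <- iota 0 n] = mkseq (nth 0 l) n.
  by apply/eq_in_map => r; rewrite mem_iota /= => hr; rewrite nth_abacus //; lia.
rewrite /mkseq -(subnKC sl) iotaD map_cat filter_cat -/(mkseq _ _) mkseq_nth.
rewrite (all_filterP (proj2 (andP pl))) -[RHS]cats0; congr cat.
apply/eqP; rewrite -(negbK (_ == _)) -has_filter; apply/hasPn => x /mapP [r].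
by rewrite mem_iota => /andP[hr _] ->; rewrite nth_default.
Qed.

Lemma ey_regular_abacus E Y : ey_regular_nat E Y l <-> hook_free predT (abacus n l) E Y.
Proof. by rewrite -ey_regular_beads ?uniq_abacus ?partition_of_abacus. Qed.

Lemma restricted_abacus k : 0 < k -> k_restricted k l <-> ~ gap_run predT (abacus n l) k.
Proof. by move=> k0; rewrite -restricted_beads ?uniq_abacus ?partition_of_abacus. Qed.

Variable P : pred nat.
Hypothesis P_infinite : forall k, exists x, k < below P x.

Lemma ey_regular_sub E Y : ey_regular_nat E Y (sub_partition P n l) <->
  hook_free P (abacus n l) E Y.
Proof.
by rewrite /sub_partition ey_regular_beads ?uniq_relabel ?hook_free_relabel ?uniq_abacus.
Qed.

Lemma restricted_sub k : 0 < k -> k_restricted k (sub_partition P n l) <->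
  ~ gap_run P (abacus n l) k.
Proof.
by move=> k0; rewrite /sub_partition restricted_beads ?uniq_relabel ?gap_run_relabel ?uniq_abacus.
Qed.

Lemma regular_sub k : 0 < k -> k_regular k (sub_partition P n l) <->
  ~ bead_run P (abacus n l) k.
Proof.
by move=> k0; rewrite /sub_partition regular_beads ?uniq_relabel ?bead_run_relabel ?uniq_abacus.
Qed.
End Abacus.

Section Runners.
Variables (e : nat) (S : {set 'I_e}).
Hypothesis e_gt0 : 0 < e.

Lemma inI_add p t : inI S (p + e * t) = inI S p.
Proof. by rewrite /inI addnC mulnC modnMDl. Qed.

Lemma count_inI_window a : count (inI S) (iota a e) = #|S|.
Proof.
elim: a => [|a IH].
  rewrite -val_enum_ord count_map cardE size_filter -enumT.
  apply: eq_count => i /=; rewrite /inI modn_small //.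
  by apply/existsP/idP => [[s /andP[sS /eqP /val_inj <-]] //|iS]; exists i; rewrite iS /=.
have : iota a e.+1 = iota a e ++ [:: a + e] by rewrite -addn1 iotaD.
move/(congr1 (count (inI S))); rewrite count_cat /= IH.
have := inI_add a 1; rewrite muln1 => ->.
by rewrite addn0 addnC => /eqP; rewrite eqn_add2r => /eqP.
Qed.

Lemma count_inI_windows a t : count (inI S) (iota a (e * t)) = #|S| * t.
Proof.
elim: t a => [|t IH] a; first by rewrite !muln0.
by rewrite mulnS iotaD count_cat count_inI_window IH mulnS.
Qed.

Lemma count_notI_windows a t :
  count (fun p => ~~ inI S p) (iota a (e * t)) = (e - #|S|) * t.
Proof.
have := count_predC (inI S) (iota a (e * t)); rewrite size_iota count_inI_windows.
rewrite (eq_count (a1 := predC (inI S)) (a2 := fun p => ~~ inI S p)) //.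
by have := max_card S; rewrite card_ord mulnBl; lia.
Qed.

Lemma inI_infinite : 0 < #|S| -> forall k, exists x, k < below (inI S) x.
Proof. by move=> S0 k; exists (e * k.+1); rewrite /below count_inI_windows; nia. Qed.

Lemma notI_infinite : #|S| < e -> forall k, exists x, k < below (fun p => ~~ inI S p) x.
Proof. by move=> Se k; exists (e * k.+1); rewrite /below count_notI_windows; nia. Qed.
End Runners.

(* In a window of [e T] positions from a gap [a] to a
   bead [a + e T], separation leaves two cases: if the bead is off [I], every
   position of [I] in the window is a bead; if it is on [I], so is [a], and
   every position off [I] in the window is a gap. *)
Section Separated.
Variables (e c : nat) (S : {set 'I_e}) (bs : seq nat).
Hypotheses (c_gt0 : 0 < c) (c_lt_e : c < e) (cardS : #|S| = c).
Hypothesis separated :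
  forall p q, inI S p -> p \notin bs -> ~~ inI S q -> q \in bs -> q < p.

Local Notation I := (inI S).
Local Notation NI := (fun p => ~~ inI S p).
Local Notation GAP := (fun p => p \notin bs).
Local Notation IG := (fun p => inI S p && (p \notin bs)).
Local Notation IB := (fun p => inI S p && (p \in bs)).
Local Notation NG := (fun p => ~~ inI S p && (p \notin bs)).
Let cb := e - c.

Lemma e_gt0 : 0 < e. Proof. lia. Qed.

Lemma beads_below_NI_bead x y : ~~ I x -> x \in bs -> y < x -> I y -> y \in bs.
Proof. by move=> nx xb yx Iy; apply: contraT => yn; have := separated Iy yn nx xb; lia. Qed.

Lemma gaps_above_I_gap a y : I a -> a \notin bs -> ~~ I y -> a < y -> y \notin bs.
Proof. by move=> Ia an ny ay; apply/negP => yb; have := separated Ia an ny yb; lia. Qed.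

Lemma count_I_windows a t : count I (iota a (e * t)) = c * t.
Proof. by rewrite count_inI_windows ?e_gt0 ?cardS. Qed.

Lemma count_NI_windows a t : count NI (iota a (e * t)) = cb * t.
Proof. by rewrite count_notI_windows ?e_gt0 ?cardS. Qed.

Lemma below_NI_e : below NI e = cb.
Proof. by have := count_NI_windows 0 1; rewrite !muln1 => <-. Qed.

Lemma count_gaps_split s : count GAP s = count IG s + count NG s.
Proof. by elim: s => //= y s ->; case: (I y); case: (y \in bs) => /=; lia. Qed.

Lemma window_NI_bead a k : ~~ I (a + k) -> (a + k) \in bs -> count IG (iota a k) = 0.
Proof.
move=> nx xb; apply: window_none => y hy; apply/negP => /andP[Iy /negP []].
by apply: (beads_below_NI_bead nx xb) => //; lia.
Qed.

Lemma window_I_gap a k : I a -> a \notin bs -> count NG (iota a k) = count NI (iota a k).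
Proof.
move=> Ia an; apply: window_and => y /andP[ay _] ny; apply: (gaps_above_I_gap Ia an ny).
by rewrite ltn_neqAle ay andbT; apply: contraNneq ny => <-.
Qed.

(* the gaps in a hook ending at a bead off [I] all lie off [I] *)
Lemma hook_off_I a T : ~~ I (a + e * T) -> (a + e * T) \in bs ->
  gaps bs (a + e * T) - gaps bs a <= cb * T.
Proof.
move=> nx xb; rewrite /gaps below_shift addKn count_gaps_split window_NI_bead //.
by rewrite -(count_NI_windows a T); apply: count_and_le.
Qed.

Lemma hook_on_I a T : 0 < T -> I (a + e * T) -> a \notin bs ->
  [/\ I a, below I (a + e * T) - below I a = c * T,
      gaps bs (a + e * T) - gaps bs a = cb * T + (pgaps I bs (a + e * T) - pgaps I bs a)
    & 0 < pgaps I bs (a + e * T) - pgaps I bs a].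
Proof.
move=> T0 Ix an; have Ia : I a by rewrite -(inI_add S a T).
rewrite /gaps /pgaps !below_shift !addKn count_I_windows count_gaps_split.
rewrite window_I_gap // count_NI_windows addnC; split=> //.
by apply: (window_mem (y := a)); rewrite ?Ia ?an // leqnn -{1}(addn0 a) ltn_add2l muln_gt0 e_gt0.
Qed.

Lemma hook_below_NI_bead x : e <= x -> ~~ I x -> x \in bs ->
  (forall y, x - e <= y < x -> ~~ I y -> y \notin bs) -> ~ hook_free predT bs e cb.
Proof.
move=> ex nx xb NIgaps; rewrite hook_free_predT => H.
have na : ~~ I (x - e) by rewrite -(inI_add S _ 1) muln1 subnK.
have gE : gaps bs x - gaps bs (x - e) = cb.
  rewrite (below_sub _ (leq_subr e x)) subKn // count_gaps_split.
  rewrite window_NI_bead ?subnK // add0n window_and; last first.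
    by move=> y; rewrite subnK //; apply: NIgaps.
  by have := count_NI_windows (x - e) 1; rewrite !muln1.
apply: (H (x - e) x 1 isT) => //; first by apply: NIgaps => //; have := e_gt0; lia.
  by have := e_gt0; lia.
by split; lia.
Qed.

(* A run of [e - c] gaps off [I] below a bead off [I] yields such a window
   below the lowest bead off [I] above the run. *)
Lemma gap_run_NI_hook : gap_run NI bs cb -> ~ hook_free predT bs e cb.
Proof.
move=> [a [a' [x [aa' /andP[nx xb] a'x hrun hk]]]].
have exq : exists q, (a' <= q) && ~~ I q && (q \in bs).
  by exists x; rewrite (below_leW (P := NI) nx a'x) nx xb.
case: (ex_minnP exq) => x' /andP[/andP[a'x' nx'] x'b] x'min.
have ex' : e <= x'.
  case: (leqP e x') => // /(below_lt (P := NI) nx'); rewrite below_NI_e.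
  by have := below_mono NI a'x'; lia.
apply: (hook_below_NI_bead ex' nx' x'b) => y /andP[hy1 hy2] ny.
case: (leqP a' y) => [a'y|ya'].
  by apply/negP => yb; have := x'min y; rewrite a'y ny yb => /(_ isT); lia.
have ay : a <= y.
  case: (leqP a y) => // /(below_lt (P := NI) ny) ya.
  have := below_shift NI (x' - e) (e * 1); rewrite count_NI_windows muln1 subnK //.
  have := below_mono NI hy1; have := below_mono NI a'x'; lia.
move: hrun; rewrite /pgaps !(below_sub _ aa') => /(window_andE (P := NI) (Q := GAP)).
by apply; rewrite ?subnKC ?ay.
Qed.

(* Conversely, an [(e, e - c)]-hook must end at a bead off [I]; its positions
   off [I] are then all gaps, a run of length at least [e - c]. *)
Lemma hook_NI_gap_run : ~ gap_run NI bs cb -> hook_free predT bs e cb.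
Proof.
rewrite hook_free_predT => Hno a x t t0 an xb ax [hl ha].
have xE : x = a + e * t by lia.
have gE : gaps bs x - gaps bs a = count GAP (iota a (e * t)) by rewrite below_sub ?hl // ltnW.
have gpos : 0 < count GAP (iota a (e * t)).
  by apply: (window_mem (y := a)) => //; rewrite -hl; lia.
have cbt : 0 < cb * t by rewrite muln_gt0 t0 andbT; lia.
case Ix: (I x).
  have Ix' : I (a + e * t) by rewrite -xE.
  by have [_ _] := hook_on_I t0 Ix' an; rewrite -xE; lia.
have IG0 : count IG (iota a (e * t)) = 0 by apply: window_NI_bead; rewrite -xE ?Ix.
apply: Hno; exists a, x, x; split; rewrite ?Ix ?xb ?(ltnW ax) //.
- rewrite /pgaps !(below_sub _ (ltnW ax)) hl.
  by have := count_gaps_split (iota a (e * t)); rewrite count_NI_windows; lia.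
- by rewrite (below_sub _ (ltnW ax)) hl count_NI_windows leq_pmulr.
Qed.

(* [(e, y)]-regularity for [y >= e - c + 1]: a hook on all runners with more
   gaps than positions off [I] ends on [I], and its gaps on [I] form a hook
   on the runners [I] *)
Lemma hook_free_I_full z Y : 0 < z -> (cb + 1) * z <= Y ->
  hook_free I bs (c * z) (Y - cb * z) -> hook_free predT bs (e * z) Y.
Proof.
move=> z0 hY H; rewrite hook_free_predT => a x t t0 an xb ax [hl ha].
have T0 : 0 < z * t by rewrite muln_gt0 z0.
have xE : x = a + e * (z * t) by rewrite mulnA; lia.
have gpos := gaps_sub_gt0 an ax.
have hYt := mul_slope_le t hY.
case Ix: (I x); last first.
  by have := hook_off_I (a := a) (T := z * t); rewrite -xE Ix => /(_ isT xb); lia.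
have Ix' : I (a + e * (z * t)) by rewrite -xE.
have [Ia hI gI _] := hook_on_I T0 Ix' an; rewrite -xE in hI gI.
apply: (H a x t t0 Ia Ix an xb ax); rewrite hI -mulnA mulnBl -mulnA; split=> //; lia.
Qed.

(* conversely, a hook on [I] of length [c z t] spans [e z t] positions,
   and adding the [(e - c) z t] gaps off [I] gives a hook on all runners *)
Lemma hook_free_full_I z Y : 0 < z -> (cb + 1) * z <= Y ->
  hook_free predT bs (e * z) Y -> hook_free I bs (c * z) (Y - cb * z).
Proof.
move=> z0 hY; rewrite hook_free_predT => H a x t t0 Ia Ix an xb ax [hl ha].
have T0 : 0 < z * t by rewrite muln_gt0 z0.
rewrite -mulnA in hl.
have xE : x = a + e * (z * t).
  apply: (below_inj (P := I)); rewrite ?inI_add //.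
  by have := below_shift I a (e * (z * t)); rewrite count_I_windows; lia.
have Ix' : I (a + e * (z * t)) by rewrite -xE.
have [_ _ gI IGpos] := hook_on_I T0 Ix' an; rewrite -xE in gI IGpos.
apply: (H a x t t0 an xb ax); rewrite {1}xE addKn mulnA; split=> //.
by have := mul_slope_le t hY; move: ha; rewrite mulnBl -mulnA; lia.
Qed.

(* [(e, y)]-regularity for [e - c < y < e - c + 1]: such a hook ends on [I]
   and has fewer than [T] gaps on [I] among its [c T] positions of [I], so
   by pigeonhole one of its [T] windows of length [e] is [c] beads of [I]
   above the gap of [I] at its start. *)
Lemma bead_run_of_window a T : 0 < T -> I a -> a \notin bs ->
  pgaps I bs (a + e * T) - pgaps I bs a < T -> bead_run I bs c.
Proof.
move=> T0 Ia an; rewrite /pgaps below_shift addKn => IGT.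
have splitI : count I (iota a (e * T)) = count IB (iota a (e * T)) + count IG (iota a (e * T)).
  exact: count_and_split.
have : (c - 1) * T < count IB (iota a (e * T)).
  by have := leq_pmull T c_gt0; move: splitI; rewrite count_I_windows mulnBl mul1n; lia.
case/window_pigeonhole => j jT hj.
have splitj : count I (iota (a + e * j) e) =
    count IB (iota (a + e * j) e) + count IG (iota (a + e * j) e) by exact: count_and_split.
have cIj : count I (iota (a + e * j) e) = c by have := count_I_windows (a + e * j) 1; rewrite !muln1.
have IGa : 0 < count IG (iota a e).
  by apply: (window_mem (y := a)); rewrite ?Ia ?an // leqnn -{1}(addn0 a) ltn_add2l e_gt0.
have j0 : 0 < j by case: j {jT} hj splitj cIj => [|//]; rewrite muln0 addn0; lia.
exists (a + e * j), (a + e * j + e); rewrite /pbeads !(below_sub _ (leq_addr e _)) addKn.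
split; [exact: leq_addr | lia | lia |].
rewrite /pgaps below_shift; apply: leq_trans (leq_addl _ _).
by apply: (window_mem (y := a)); rewrite ?Ia ?an // leqnn -{1}(addn0 a) ltn_add2l muln_gt0 e_gt0.
Qed.

Lemma hook_free_between z Y : 0 < z -> cb * z < Y -> Y < (cb + 1) * z ->
  ~ bead_run I bs c -> hook_free predT bs (e * z) Y.
Proof.
move=> z0 hY1 hY2 Hno; rewrite hook_free_predT => a x t t0 an xb ax [hl ha].
have T0 : 0 < z * t by rewrite muln_gt0 z0.
have xE : x = a + e * (z * t) by rewrite mulnA; lia.
have gpos := gaps_sub_gt0 an ax.
have lo := mul_slope_lt t0 hY1; have hi := mul_slope_gt t0 hY2.
case Ix: (I x); last first.
  by have := hook_off_I (a := a) (T := z * t); rewrite -xE Ix => /(_ isT xb); lia.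
have Ix' : I (a + e * (z * t)) by rewrite -xE.
have [Ia _ gI _] := hook_on_I T0 Ix' an.
by apply: Hno; apply: (bead_run_of_window T0 Ia an); rewrite -xE in gI *; lia.
Qed.

(* [e]-restrictedness: a run of [e] gaps below a bead contains a window of
   [c] positions of [I], so by separation the bead lies on [I]. *)
Lemma gap_run_full_I : gap_run predT bs e -> gap_run I bs c.
Proof.
case/gap_run_predT => a [a' [x [aa' a'x xb hrun he]]].
have allgap : forall y, a <= y < a + (a' - a) -> y \notin bs.
  by apply: window_full; rewrite -below_sub.
have cIe : count I (iota a e) = c by have := count_I_windows a 1; rewrite !muln1.
have Ix : I x.
  apply: contraT => nx.
  have /hasP [y] : has I (iota a e) by rewrite has_count cIe.
  rewrite mem_iota => hy Iy; have /negP[] := allgap y ltac:(lia).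
  by apply: (beads_below_NI_bead nx xb) => //; lia.
exists a, (a + e), x; rewrite /pgaps !(below_sub _ (leq_addr e a)) addKn.
split; [exact: leq_addr | by rewrite Ix xb | apply: below_mono; lia | | by rewrite cIe].
by apply: window_and => y hy _; apply: allgap; lia.
Qed.

(* Conversely, a run of [c] gaps of [I] below a bead of [I] contains the
   positions of [I] in the window of length [e] from its first position of
   [I]; by separation the whole window consists of gaps. *)
Lemma gap_run_I_full : gap_run I bs c -> gap_run predT bs e.
Proof.
move=> [a [a' [x [aa' /andP[Ix xb] a'x hrun hc]]]]; apply/gap_run_predT.
have Igaps : forall y, a <= y < a + (a' - a) -> I y -> y \notin bs.
  by apply: (window_andE (P := I) (Q := GAP)); move: hrun; rewrite /pgaps !(below_sub _ aa').
have : has I (iota a (a' - a)) by rewrite has_count -below_sub //; lia.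
case/hasP => q0; rewrite mem_iota => hq0 Iq0.
have exq : exists q, (a <= q) && I q by exists q0; rewrite Iq0 andbT; lia.
case: (ex_minnP exq) => p /andP[ap Ip] pmin.
have pq0 : p <= q0 by apply: pmin; rewrite Iq0 andbT; lia.
have Rpa : below I p = below I a.
  rewrite (below_window _ ap) window_none ?addn0 // => y hy; apply/negP => Iy.
  have ay : a <= y by lia.
  by have := pmin y; rewrite Iy ay => /(_ isT); lia.
have pn : p \notin bs by apply: Igaps => //; lia.
have Rpe : below I (p + e) = below I p + c.
  by have := below_shift I p (e * 1); rewrite count_I_windows !muln1.
have allgap : forall y, p <= y < p + e -> y \notin bs.
  move=> y hy; case Iy: (I y).
    apply: Igaps => //; apply/andP; split; first lia.
    case: (ltnP y a') => [|/(below_mono I) ya']; first lia.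
    by have := below_lt (P := I) Iy (q := p + e) ltac:(lia); lia.
  apply: (gaps_above_I_gap Ip pn (negbT Iy)).
  by rewrite ltn_neqAle (proj1 (andP hy)) andbT; apply: contraFneq Iy => <-.
have xpe : p + e <= x.
  by case: (leqP (p + e) x) => // /(below_lt (P := I) Ix); lia.
exists p, (p + e), x; rewrite (below_sub _ (leq_addr e p)) addKn window_fullI //.
by split=> //; exact: leq_addr.
Qed.

Lemma hook_free_e_iff : hook_free predT bs e cb <-> ~ gap_run NI bs cb.
Proof. by split=> [H /gap_run_NI_hook|/hook_NI_gap_run]. Qed.

Lemma hook_free_slope_iff z Y : 0 < z -> (cb + 1) * z <= Y ->
  hook_free predT bs (e * z) Y <-> hook_free I bs (c * z) (Y - cb * z).
Proof. by move=> z0 hY; split; [apply: hook_free_full_I | apply: hook_free_I_full]. Qed.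

Lemma gap_run_e_iff : gap_run predT bs e <-> gap_run I bs c.
Proof. by split; [apply: gap_run_full_I | apply: gap_run_I_full]. Qed.
End Separated.

Section RationalSlopes.
Import Order.TTheory GRing.Theory Num.Theory.

Lemma numq_pos (y : rat) : (0 < y)%R -> numq y = Posz `|numq y|%N.
Proof. by move=> y0; rewrite abszE gtr0_norm // numq_gt0. Qed.

Lemma denq_pos (y : rat) : denq y = Posz `|denq y|%N.
Proof. by rewrite abszE gtr0_norm // denq_gt0. Qed.

Lemma absz_denq_gt0 (y : rat) : 0 < `|denq y|.
Proof. by rewrite absz_gt0 denq_neq0. Qed.

Lemma nat_lt_rat (y : rat) (m : nat) : (m%:Q < y)%R -> m * `|denq y| < `|numq y|.
Proof.
move=> my; have y0 : (0 < y)%R by apply: le_lt_trans my; rewrite ler0z.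
have : (m%:Q * (denq y)%:~R < (numq y)%:~R)%R by rewrite numqE ltr_pM2r ?ltr0z.
by rewrite -intrM ltr_int {1}denq_pos [numq y]numq_pos // -PoszM ltz_nat.
Qed.

Lemma nat_le_rat (y : rat) (m : nat) : (0 < y)%R -> (m%:Q <= y)%R -> m * `|denq y| <= `|numq y|.
Proof.
move=> y0 my; have : (m%:Q * (denq y)%:~R <= (numq y)%:~R)%R.
  by rewrite numqE ler_pM2r ?ltr0z.
by rewrite -intrM ler_int {1}denq_pos [numq y]numq_pos // -PoszM lez_nat.
Qed.

Lemma rat_lt_nat (y : rat) (m : nat) : (0 < y)%R -> (y < m%:Q)%R -> `|numq y| < m * `|denq y|.
Proof.
move=> y0 ym; have : ((numq y)%:~R < m%:Q * (denq y)%:~R)%R.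
  by rewrite numqE ltr_pM2r ?ltr0z.
by rewrite -intrM ltr_int [denq y]denq_pos [numq y]numq_pos // -PoszM ltz_nat.
Qed.

Lemma rat_lt_succ (y : rat) (m : nat) : (m%:Q < y)%R -> (y < m%:Q + 1)%R ->
  `|numq y| < (m + 1) * `|denq y|.
Proof.
move=> my ym; apply: rat_lt_nat; first by apply: le_lt_trans my; rewrite ler0z.
by rewrite PoszD intrD.
Qed.

Lemma rat_ge_succ (y : rat) (m : nat) : (m%:Q + 1 <= y)%R ->
  (m%:Q < y)%R /\ (m + 1) * `|denq y| <= `|numq y|.
Proof.
move=> my; have my' : (m%:Q < y)%R by apply: lt_le_trans my; rewrite ltrDl.
split=> //; apply: nat_le_rat; first by apply: le_lt_trans my'; rewrite ler0z.
by rewrite PoszD intrD.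
Qed.

Lemma rat_sub_nat (y : rat) (m : nat) : (m%:Q < y)%R ->
  `|denq (y - m%:Q)| = `|denq y| /\ `|numq (y - m%:Q)| = `|numq y| - m * `|denq y|.
Proof.
move=> my; have y0 : (0 < y)%R by apply: le_lt_trans my; rewrite ler0z.
have hl := nat_lt_rat my; set Y := `|numq y| in hl *; set z := `|denq y| in hl *.
have eN : numq y = Posz Y by rewrite /Y -numq_pos.
have eD : denq y = Posz z by rewrite /z -denq_pos.
have z0 : 0 < z := absz_denq_gt0 y.
have E : (y - m%:Q = (Posz (Y - m * z))%:~R / (Posz z)%:~R)%R.
  rewrite -{1}[y]divq_num_den eN eD -[Posz (Y - _)]/(Posz (Y - m * z)).
  rewrite -subzn ?(ltnW hl) // PoszM intrB intrM.
  by field; rewrite pnatr_eq0 -lt0n.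
have cp : coprime `|Posz (Y - m * z)| `|Posz z|.
  rewrite /= /coprime gcdnC -(gcdnMDl m) subnKC ?(ltnW hl) // gcdnC.
  exact: coprime_num_den y.
rewrite E coprimeq_den // coprimeq_num //= ifN ?eqz_nat -?lt0n //.
by rewrite gtr0_sg ?ltz_nat // mul1r.
Qed.
End RationalSlopes.

(* Parts (1)-(4) of the theorem, by the comparisons above. *)
Theorem mainTheorem15 (e c : nat) (S : {set 'I_e}) (n : nat) (l : seq nat) :
  4 <= e -> #|S| = c -> 2 <= c <= e - 2 ->
  is_partition l -> e %| n -> size l <= n ->
  I_separated S n l ->
  [/\ ey_regular_nat e (e - c) l <-> k_restricted (e - c) (lamIbar S n l),
      k_regular c (lamI S n l) ->
        forall y : rat, (((e - c)%N)%:Q < y)%R -> (y < ((e - c)%N)%:Q + 1)%R ->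
          ey_regular e y l,
      forall y : rat, (((e - c)%N)%:Q + 1 <= y)%R -> (y <= e%:Q - 1)%R ->
        (ey_regular e y l <-> ey_regular c (y - ((e - c)%N)%:Q)%R (lamI S n l))
    & k_restricted e l <-> k_restricted c (lamI S n l)].
Proof.
move=> he cardS hc pl _ sl sep.
have c_gt0 : 0 < c by lia.
have c_lt_e : c < e by lia.
have e_gt0 : 0 < e by lia.
have Iinf := inI_infinite e_gt0 (ltac:(lia) : 0 < #|S|).
have NIinf := notI_infinite e_gt0 (ltac:(lia) : #|S| < e).
have sepI : forall p q, inI S p -> p \notin abacus n l -> ~~ inI S q ->
  q \in abacus n l -> q < p := sep.
split.
- rewrite (ey_regular_abacus pl sl) /lamIbar (restricted_sub pl sl NIinf); last lia.
  exact: hook_free_e_iff c_gt0 c_lt_e cardS sepI.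
- move=> Hreg y ylo yhi; rewrite /ey_regular (ey_regular_abacus pl sl).
  apply: (hook_free_between c_gt0 c_lt_e cardS sepI (absz_denq_gt0 y)).
  + exact: nat_lt_rat ylo.
  + exact: rat_lt_succ ylo yhi.
  + exact: (regular_sub pl sl Iinf c_gt0).1 Hreg.
- move=> y ylo _; have [ygt hY] := rat_ge_succ ylo; rewrite /ey_regular.
  have [-> ->] := rat_sub_nat ygt.
  rewrite (ey_regular_abacus pl sl) /lamI (ey_regular_sub pl sl Iinf).
  exact (hook_free_slope_iff c_gt0 c_lt_e cardS sepI (absz_denq_gt0 y) hY).
- rewrite (restricted_abacus pl sl e_gt0) /lamI (restricted_sub pl sl Iinf c_gt0).
  by have := gap_run_e_iff c_gt0 c_lt_e cardS sepI; tauto.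
Qed.
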